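(* Let $M=(E,\mathcal{L})$ be a matroid. Then its near finitarization $M^{\mathrm{nfin}}$ is a finitary matroid if and only if $M$ is nearly finitary.
   Context: Matroids (possibly infinite): $\emptyset$ independent; subsets of independent sets independent; if $B$ is maximal independent and $A$ non-maximal independent, then $A\cup\{b\}$ is independent for some $b\in B\setminus A$; for independent $A\subseteq X\subseteq E$ there is a maximal independent $S$ with $A\subseteq S\subseteq X$. Bases are maximal independent sets. The finitarization $M^{\mathrm{fin}}=(E,\mathcal{L}^{\mathrm{fin}})$ has $\mathcal{L}^{\mathrm{fin}}$ = sets all of whose finite subsets lie in $\mathcal{L}$. The near finitarization is $M^{\mathrm{nfin}}=(E,\mathcal{L}^{\mathrm{nfin}})$ with $\mathcal{L}^{\mathrm{nfin}}=\{F\in\mathcal{L}^{\mathrm{fin}}:\exists S\in\mathcal{L},\ S\subseteq F,\ |F\setminus S|<\infty\}$. A matroid is finitary if a set is independent iff all its finite subsets are independent. $M$ is nearly finitary if $F\setminus B$ is finite whenever a base $F$ of $M^{\mathrm{fin}}$ contains a base $B$ of $M$. *)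

From mathcomp Require Import all_boot.
From mathcomp Require Import boolp classical_sets cardinality.
Set Implicit Arguments. Unset Strict Implicit. Unset Printing Implicit Defensive.
Local Open Scope classical_set_scope.

(* The ground set of a matroid is the whole type [T]; an independence system
   is a family [L : set (set T)] of independent sets. *)

Definition maximal_in {T : Type} (L : set (set T)) (X S : set T) : Prop :=
  L S /\ S `<=` X /\ (forall S', L S' -> S `<=` S' -> S' `<=` X -> S' = S).

Definition is_base {T : Type} (L : set (set T)) (B : set T) : Prop :=
  maximal_in L setT B.

Definition is_matroid {T : Type} (L : set (set T)) : Prop :=
  [/\ L set0,
      (forall A B, L B -> A `<=` B -> L A),
      (forall A B, L A -> ~ is_base L A -> is_base L B ->
         exists b, B b /\ ~ A b /\ L (A `|` [set b]))
    & (forall A X, L A -> A `<=` X -> exists S, A `<=` S /\ maximal_in L X S)].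

Definition fin_indep {T : Type} (L : set (set T)) : set (set T) :=
  [set F | forall G, G `<=` F -> finite_set G -> L G].

Definition nfin_indep {T : Type} (L : set (set T)) : set (set T) :=
  [set F | fin_indep L F /\ exists S, L S /\ S `<=` F /\ finite_set (F `\` S)].

Definition finitary {T : Type} (L : set (set T)) : Prop :=
  forall F, L F <-> (forall G, G `<=` F -> finite_set G -> L G).

Definition nearly_finitary {T : Type} (L : set (set T)) : Prop :=
  forall F B, is_base (fin_indep L) F -> is_base L B -> B `<=` F ->
    finite_set (F `\` B).

From mathcomp Require Import all_boot.
From mathcomp Require Import boolp classical_sets cardinality.
Set Implicit Arguments. Unset Strict Implicit. Unset Printing Implicit Defensive.
Local Open Scope classical_set_scope.

(* The finitarization of a matroid is always a finitary matroid, so both sides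
   of the equivalence amount to [nfin_indep L = fin_indep L].  A finitary
   [nfin_indep L] contains every finite set of [fin_indep L], hence all of it.
   If [L] is nearly finitary, a set of [fin_indep L] extends to a base [F] of
   the finitarization, which contains a base [B] of [L] with [F `\` B] finite,
   so the set lies in [nfin_indep L].  Conversely, if a base [F] of the
   finitarization contains an independent [S] with [F `\` S] finite, and a base
   [B] of [L] with [B `<=` F], then [B `\` S] is finite, hence so is [S `\` B]
   by repeated base exchange, and [F `\` B] is finite. *)

Lemma finite_set_ind T (P : set T -> Prop) :
  P set0 -> (forall A x, P A -> P (A `|` [set x])) ->
  forall A, finite_set A -> P A.
Proof.
move=> P0 PU A /(@finite_seqP {classic T})[s ->].
elim: s => [|x s IH]; first by rewrite set_nil.
suff -> : [set` x :: s] = [set` s] `|` [set x] :> set T by apply: PU.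
apply/seteqP; split=> y /=; rewrite inE.
- by case/orP=> [/eqP->|]; [right|left].
- by case=> [->|->]; rewrite ?eqxx ?orbT.
Qed.

Lemma finite_subset_bigcup_chain T (F : set (set T)) (G : set T) :
  total_on F subset -> finite_set G -> G `<=` \bigcup_(X in F) X ->
  exists2 S, S = set0 \/ F S & G `<=` S.
Proof.
move=> Ftot; move: G; apply: finite_set_ind => [_|G x IH GxF].
  by exists set0; [left|].
have [S HS GS] := IH (fun y Gy => GxF y (or_introl Gy)).
have [Y FY Yx] := GxF x (or_intror erefl).
case: HS => [S0|FS].
  by exists Y; [right|move=> y [/GS|->] //; rewrite S0].
case: (Ftot S Y FS FY) => [SY|YS].
  by exists Y; [right|move=> y [/GS/SY|->]].
by exists S; [right|move=> y [/GS|->] //; apply: YS].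
Qed.

Section IndependenceSystem.
Variables (T : Type) (L : set (set T)).

Lemma maximal_in_add X S b :
  maximal_in L X S -> X b -> L (S `|` [set b]) -> S b.
Proof.
move=> [_ [SX Smax]] Xb LSb; rewrite -(Smax _ LSb) //; first by right.
by move=> x [/SX|->].
Qed.

Lemma base_sub_eq B S : is_base L B -> L S -> B `<=` S -> S = B.
Proof. by move=> [_ [_ Bmax]] LS BS; apply: Bmax. Qed.

Lemma not_maximal_in_augment X A :
  (forall A B, L B -> A `<=` B -> L A) ->
  L A -> A `<=` X -> ~ maximal_in L X A ->
  exists z, X z /\ ~ A z /\ L (A `|` [set z]).
Proof.
move=> Lsub LA AX nmA; apply: contra_notP nmA => noaug.
split=> //; split=> // S LS AS SX; apply/seteqP; split=> // x Sx.
apply: contrapT => nAx; apply: noaug; exists x; split; first exact: SX.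
by split=> //; apply: Lsub LS _ => y [/AS|->].
Qed.

Lemma fin_indepS A B : fin_indep L B -> A `<=` B -> fin_indep L A.
Proof. by move=> fB AB G GA; apply: fB => x /GA /AB. Qed.

Lemma fin_indepN F :
  ~ fin_indep L F -> exists G, G `<=` F /\ finite_set G /\ ~ L G.
Proof.
move=> nfF; apply: contrapT => noG; apply: nfF => G GF finG.
by apply: contrapT => nLG; apply: noG; exists G.
Qed.

Lemma finitary_fin_indep : finitary (fin_indep L).
Proof.
move=> F; split=> [fF G GF _|fF]; first exact: fin_indepS fF GF.
by move=> G GF finG; apply: (fF G GF finG).
Qed.

Lemma fin_indep_maximal A X :
  fin_indep L A -> A `<=` X ->
  exists S, A `<=` S /\ maximal_in (fin_indep L) X S.
Proof.
move=> fA AX.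
(* Zorn's lemma is applied to the sets [S] with [A `|` S] in [fin_indep L]
   rather than to supersets of [A], so that the union of the empty chain
   qualifies. *)
pose P := [set S | S `<=` X /\ fin_indep L (A `|` S)].
have chainP F : F `<=` P -> total_on F subset -> P (\bigcup_(Y in F) Y).
  move=> FP Ftot; split; first by move=> x [Y /FP[YX _] /YX].
  move=> G GAF finG.
  have GF : G `\` A `<=` \bigcup_(Y in F) Y by move=> x [/GAF[]].
  have [S [S0|FS] GS] :=
    finite_subset_bigcup_chain Ftot (finite_setD A finG) GF.
    apply: fA => // x Gx; apply: contrapT => nAx.
    by have := GS x (conj Gx nAx); rewrite S0.
  apply: (FP S FS).2 => // x Gx.
  by case: (pselect (A x)) => [|nAx]; [left|right; apply: GS].
have [S0 [[S0X fAS0] S0max]] := Zorn_bigcup chainP.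
exists (A `|` S0); split; first exact: subsetUl.
split=> //; split; first by move=> x [/AX|/S0X].
move=> S fS AS0S SX.
have S0S : S0 `<=` S by move=> x S0x; apply: AS0S; right.
have SS0 : S `<=` S0.
  apply: contrapT => nSS0; apply: (S0max S); first by split.
  split=> //; apply: fin_indepS fS _ => x [Ax|//].
  by apply: AS0S; left.
by apply/seteqP; split=> // x /SS0; right.
Qed.

End IndependenceSystem.

Lemma finitary_nfin_indepE T (L : set (set T)) :
  finitary (nfin_indep L) <-> nfin_indep L = fin_indep L.
Proof.
split=> [finL|->]; last exact: finitary_fin_indep.
apply/seteqP; split=> [F [] //|F fF]; apply/finL => G GF finG.
split; first exact: fin_indepS fF GF.
by exists G; split; [exact: fF|split; last rewrite setDv].
Qed.

Section Matroid.
Variables (T : Type) (L : set (set T)).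
Hypothesis matroidL : is_matroid L.

Let indep0 : L set0.
Proof. by case: matroidL. Qed.

Let indep_sub A B : L B -> A `<=` B -> L A.
Proof. by case: matroidL => _ + _ _; apply. Qed.

Let indep_augment A B : L A -> ~ is_base L A -> is_base L B ->
  exists b, B b /\ ~ A b /\ L (A `|` [set b]).
Proof. by case: matroidL => _ _ + _; apply. Qed.

Let indep_extend A X : L A -> A `<=` X ->
  exists S, A `<=` S /\ maximal_in L X S.
Proof. by case: matroidL => _ _ _; apply. Qed.

Lemma maximal_in_base X B S :
  is_base L B -> B `<=` X -> maximal_in L X S -> is_base L S.
Proof.
move=> bB BX mS; apply: contrapT => nbS.
have [b [Bb [nSb LSb]]] := indep_augment mS.1 nbS bB.
exact/nSb/(maximal_in_add mS (BX b Bb) LSb).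
Qed.

Lemma maximal_in_augment X A B :
  L A -> A `<=` X -> ~ maximal_in L X A -> maximal_in L X B ->
  exists b, B b /\ ~ A b /\ L (A `|` [set b]).
Proof.
move=> LA AX nmA mB; have [LB [BX _]] := mB.
have [z [Xz [nAz LAz]]] := not_maximal_in_augment indep_sub LA AX nmA.
have [B1 [BB1 bB1]] := indep_extend LB (subsetT B).
have [A1 [AA1 mA1]] := indep_extend LA (@subsetUl _ A B1).
have bA1 := maximal_in_base bB1 (@subsetUr _ A B1) mA1.
have [J [AzJ mJ]] := indep_extend LAz (@setSU _ [set z] _ _ AA1).
have bJ := maximal_in_base bA1 (@subsetUl _ A1 [set z]) mJ.
(* [B] together with the part of [J] outside [X] is a base: any augmentation
   from [J] would have to lie in [X], contradicting the maximality of [B]. *)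
pose Q := B `|` (J `\` X).
have bQ : is_base L Q.
  have LQ : L Q.
    apply: indep_sub bB1.1 _ => x [/BB1 //|[Jx nXx]].
    case: (mJ.2.1 x Jx) => [/(mA1.2.1 x)[/AX //|//]|xz].
    by move: nXx; rewrite xz.
  apply: contrapT => nbQ.
  have [j [Jj [nQj LQj]]] := indep_augment LQ nbQ bJ.
  have Xj : X j by apply: contrapT => nXj; apply: nQj; right.
  apply: nQj; left; apply: (maximal_in_add mB Xj).
  by apply: indep_sub LQj _ => x [Bx|->]; [left; left|right].
have nbJz : ~ is_base L (J `\ z).
  move=> bJz; have eJ := base_sub_eq bJz mJ.1 (@subDsetl _ J [set z]).
  by have := AzJ z (or_intror erefl); rewrite eJ => -[_ /(_ erefl)].
have [b [Qb [nJzb LJzb]]] := indep_augment (indep_sub mJ.1 (@subDsetl _ _ _))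
  nbJz bQ.
have AJz : A `<=` J `\ z.
  by move=> x Ax; split; [apply: AzJ; left|move=> xz; apply: nAz; rewrite -xz].
have Bb : B b.
  case: Qb => // -[Jb nXb]; case: nJzb; split=> // bz.
  by apply: nXb; rewrite bz.
exists b; split=> //; split; first by move/AJz.
by apply: indep_sub LJzb _ => x [/AJz|->]; [left|right].
Qed.

Lemma dependent_augment I H z :
  L (I `|` [set z]) -> ~ I z -> L H -> ~ L (H `|` [set z]) ->
  exists k, H k /\ ~ I k /\ L (I `|` [set k]).
Proof.
move=> LIz nIz LH nLHz.
pose X := I `|` H `|` [set z].
have [K [HK mK]] := indep_extend LH (fun x Hx => or_introl (or_intror Hx) : X x).
have LI : L I := indep_sub LIz (@subsetUl _ I [set z]).
have nmI : ~ maximal_in L X I.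
  by move=> mI; apply/nIz/(maximal_in_add mI _ LIz); right.
have [k [Kk [nIk LIk]]] :=
  maximal_in_augment LI (fun x Ix => or_introl (or_introl Ix)) nmI mK.
exists k; split=> //.
case: (mK.2.1 k Kk) => [[//|//]|kz].
by case: nLHz; apply: indep_sub mK.1 _ => x [/HK|->] //; rewrite -kz.
Qed.

Lemma not_fin_indep_add S x :
  fin_indep L S -> ~ fin_indep L (S `|` [set x]) ->
  exists H, [/\ H `<=` S, finite_set H, L H & ~ L (H `|` [set x])].
Proof.
move=> fS /fin_indepN[G [GSx [finG nLG]]].
have GxS : G `\ x `<=` S by move=> y [/GSx[//|yx] nyx].
exists (G `\ x); split=> //; first exact: finite_setD.
  exact: fS GxS (finite_setD _ finG).
move=> LGx; apply: nLG; apply: indep_sub LGx _ => y Gy.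
by case: (pselect (y = x)) => [->|nyx]; [right|left].
Qed.

Lemma fin_indep_augment A B :
  fin_indep L A -> ~ is_base (fin_indep L) A -> is_base (fin_indep L) B ->
  exists b, B b /\ ~ A b /\ fin_indep L (A `|` [set b]).
Proof.
move=> fA nbA bB; apply: contrapT => noaug.
have nfAb b : B b -> ~ A b -> ~ fin_indep L (A `|` [set b]).
  by move=> Bb nAb fAb; apply: noaug; exists b.
have [z [_ [nAz fAz]]] :=
  not_maximal_in_augment (@fin_indepS _ L) fA (subsetT A) nbA.
have nBz : ~ B z by move=> Bz; apply: nfAb fAz.
have [H [HB finH LH nLHz]] :=
  not_fin_indep_add bB.1 (fun fBz => nBz (maximal_in_add bB I fBz)).
have /choice[D HD] : forall b, exists D, B b -> ~ A b ->
    [/\ D `<=` A, finite_set D, L D & ~ L (D `|` [set b])].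
  move=> b; case: (pselect (B b /\ ~ A b)) => [[Bb nAb]|nBAb].
    by have [D HD] := not_fin_indep_add fA (nfAb b Bb nAb); exists D.
  by exists set0 => Bb nAb; case: nBAb.
(* [A0] is a finite part of [A] that still witnesses, for every [b] in [H]
   outside [A], that [b] cannot be added to [A]. *)
pose A0 := A `&` (H `|` \bigcup_(b in H `\` A) D b).
have finA0 : finite_set A0.
  apply: finite_setIr; rewrite finite_setU; split=> //.
  apply: bigcup_finite; first exact: finite_setD.
  by move=> b [/HB Bb nAb]; have [] := HD b Bb nAb.
have LA0z : L (A0 `|` [set z]).
  apply: fAz; last by rewrite finite_setU.
  by move=> x [[Ax _]|->]; [left|right].
have [k [Hk [nA0k LA0k]]] := dependent_augment LA0z (fun A0z => nAz A0z.1) LH nLHz.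
have nAk : ~ A k by move=> Ak; apply: nA0k; split=> //; left.
have [DA _ _ nLDk] := HD k (HB k Hk) nAk.
apply: nLDk; apply: indep_sub LA0k _ => x [Dx|->]; last by right.
by left; split; [exact: DA|right; exists k].
Qed.

Lemma fin_indep_matroid : is_matroid (fin_indep L).
Proof.
split.
- by move=> G G0 _; apply: indep_sub indep0 G0.
- by move=> A B; apply: fin_indepS.
- exact: fin_indep_augment.
- by move=> A X; apply: fin_indep_maximal.
Qed.

Lemma fin_base_maximal_in_base F B :
  is_base (fin_indep L) F -> maximal_in L F B -> is_base L B.
Proof.
move=> bF mB; apply: contrapT => nbB.
have [B0 [_ bB0]] := indep_extend indep0 (subsetT set0).
have [x [_ [nBx LBx]]] := indep_augment mB.1 nbB bB0.
have nFx : ~ F x by move=> Fx; exact/nBx/(maximal_in_add mB Fx LBx).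
have [H [HF _ LH nLHx]] :=
  not_fin_indep_add bF.1 (fun fFx => nFx (maximal_in_add bF I fFx)).
have [k [Hk [nBk LBk]]] := dependent_augment LBx nBx LH nLHx.
exact/nBk/(maximal_in_add mB (HF k Hk) LBk).
Qed.

Lemma base_exchange B B' a :
  is_base L B -> is_base L B' -> B a -> ~ B' a ->
  exists s, B' s /\ ~ B s /\ is_base L (B `\ a `|` [set s]).
Proof.
move=> bB bB' Ba nB'a.
have LBa : L (B `\ a) := indep_sub bB.1 (@subDsetl _ B [set a]).
have nbBa : ~ is_base L (B `\ a).
  move=> bBa; have eB := base_sub_eq bBa bB.1 (@subDsetl _ B [set a]).
  by move: Ba; rewrite eB => -[_ /(_ erefl)].
have [s [B's [nBas LBas]]] := indep_augment LBa nbBa bB'.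
have nBs : ~ B s by move=> Bs; apply: nBas; split=> // sa; apply: nB'a; rewrite -sa.
exists s; split=> //; split=> //; apply: contrapT => nbBas.
have [b [Bb [nBasb LBasb]]] := indep_augment LBas nbBas bB.
have ba : b = a by apply: contrapT => nba; apply: nBasb; left.
apply/nBs/(maximal_in_add bB I); apply: indep_sub LBasb _ => x [Bx|->].
  by case: (pselect (x = a)) => [->|nxa]; [right|left; left].
by left; right.
Qed.

Lemma base_diff_finite D : finite_set D ->
  forall B B', is_base L B -> is_base L B' -> B `\` B' `<=` D ->
  finite_set (B' `\` B).
Proof.
move: D; apply: finite_set_ind => [|D a IH] B B' bB bB' BB'D.
  have BB' : B `<=` B'.
    by move=> x Bx; apply: contrapT => nB'x; apply: (BB'D x).
  by rewrite (base_sub_eq bB bB'.1 BB') setDv.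
case: (pselect (B a /\ ~ B' a)) => [[Ba nB'a]|nBa]; last first.
  apply: IH bB bB' _ => x [Bx nB'x]; case: (BB'D x (conj Bx nB'x)) => // xa.
  by case: nBa; rewrite -xa.
have [s [B's [nBs bBas]]] := base_exchange bB bB' Ba nB'a.
apply: (@sub_finite_set _ _ ((B' `\` (B `\ a `|` [set s])) `|` [set s])).
  move=> x [B'x nBx]; case: (pselect (x = s)) => [->|nxs]; first by right.
  by left; split=> // -[[]|].
rewrite finite_setU; split=> //; apply: IH bBas bB' _.
move=> x [[[Bx nxa]|xs] nB'x]; last by case: nB'x; rewrite xs.
by case: (BB'D x (conj Bx nB'x)).
Qed.

Lemma base_indep_finite_diff B S :
  is_base L B -> L S -> finite_set (B `\` S) -> finite_set (S `\` B).
Proof.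
move=> bB LS finBS; have [S' [SS' bS']] := indep_extend LS (subsetT S).
apply: (@sub_finite_set _ _ (S' `\` B)); first by move=> x [/SS'].
apply: (base_diff_finite finBS bB bS') => x [Bx nS'x].
by split=> // Sx; apply/nS'x/SS'.
Qed.

Lemma nearly_finitary_nfin_indepE :
  nearly_finitary L <-> nfin_indep L = fin_indep L.
Proof.
split=> [nfinL|nfinE F B bF bB BF].
  apply/seteqP; split=> [F [] //|F fF]; split=> //.
  have [F' [FF' bF']] := fin_indep_maximal fF (subsetT F).
  have [B [_ mB]] := indep_extend indep0 (sub0set F').
  have bB := fin_base_maximal_in_base bF' mB.
  exists (B `&` F); split; first exact: indep_sub bB.1 (@subIsetl _ B F).
  split; first exact: subIsetr.
  apply: sub_finite_set (nfinL F' B bF' bB mB.2.1) => x [Fx nBFx].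
  by split; [exact: FF'|move=> Bx; apply: nBFx].
have [_ [S [LS [SF finFS]]]] : nfin_indep L F by rewrite nfinE; exact: bF.1.
have finBS : finite_set (B `\` S) by apply: sub_finite_set finFS => x [/BF].
have finSB := base_indep_finite_diff bB LS finBS.
apply: (@sub_finite_set _ _ ((F `\` S) `|` (S `\` B))); last first.
  by rewrite finite_setU.
by move=> x [Fx nBx]; case: (pselect (S x)) => Sx; [right|left].
Qed.

End Matroid.

Theorem theorem4p1p1 (T : Type) (L : set (set T)) :
  is_matroid L ->
  ((is_matroid (nfin_indep L) /\ finitary (nfin_indep L)) <-> nearly_finitary L).
Proof.
move=> matroidL; split.
  by move=> [_ /finitary_nfin_indepE /(nearly_finitary_nfin_indepE matroidL)].
move/(nearly_finitary_nfin_indepE matroidL) => ->.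
by split; [exact: fin_indep_matroid|exact: finitary_fin_indep].
Qed.
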